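(* There is an absolute constant $c>0$ such that for every $n\ge2$, every $0<\rho\le1/3$ and every $0<\varepsilon\le\rho^{2n}$, the maximum over all $n$-agent symmetric averaging systems with parameter $\rho$ of the communication count $\mathcal{C}_\varepsilon$ is at least $$\Bigl(\frac{c}{\rho n}\log\frac1\varepsilon\Bigr)^{n-1}.$$
   Context: A (symmetric) averaging system with parameter $\rho\in(0,1/2]$ on $n$ agents consists of an infinite sequence of undirected graphs $(g_t)_{t\ge1}$ on $\{1,\dots,n\}$, each with a self-loop at every vertex, together with positions $x_i(t)\in[0,1]$ obeying: for each $t$ and vertex $i$, with $L_i(t)=\min\{x_j(t): \{i,j\}\in g_t\}$, $R_i(t)=\max\{x_j(t): \{i,j\}\in g_t\}$ and $\delta_i(t)=\rho(R_i(t)-L_i(t))$, the new position satisfies $L_i(t)+\delta_i(t)\le x_i(t+1)\le R_i(t)-\delta_i(t)$. The communication count $\mathcal{C}_\varepsilon$ of such a system is the number of time steps $t$ at which $g_t$ has an edge $\{i,j\}$ with $|x_i(t)-x_j(t)|\ge\varepsilon$. Logarithms are base 2. *)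

From Stdlib Require Import Reals Lra Lia List.
Open Scope R_scope.

(* Agents are 0..n-1; time steps are indexed by t : nat (starting at 0).
   g t i j : {i,j} is an edge of the graph g_t. x t i : position of agent i at time t. *)

Definition log2 (y : R) : R := ln y / ln 2.

Definition is_nbr_min (n : nat) (g : nat -> nat -> nat -> Prop) (x : nat -> nat -> R)
  (t i : nat) (L : R) : Prop :=
  (exists j, (j < n)%nat /\ g t i j /\ x t j = L) /\
  (forall j, (j < n)%nat -> g t i j -> L <= x t j).

Definition is_nbr_max (n : nat) (g : nat -> nat -> nat -> Prop) (x : nat -> nat -> R)
  (t i : nat) (R' : R) : Prop :=
  (exists j, (j < n)%nat /\ g t i j /\ x t j = R') /\
  (forall j, (j < n)%nat -> g t i j -> x t j <= R').

Definition averaging_system (n : nat) (rho : R)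
  (g : nat -> nat -> nat -> Prop) (x : nat -> nat -> R) : Prop :=
  (forall t i, (i < n)%nat -> g t i i) /\
  (forall t i j, (i < n)%nat -> (j < n)%nat -> g t i j -> g t j i) /\
  (forall t i, (i < n)%nat -> 0 <= x t i <= 1) /\
  (forall t i L R', (i < n)%nat -> is_nbr_min n g x t i L -> is_nbr_max n g x t i R' ->
     L + rho * (R' - L) <= x (S t) i <= R' - rho * (R' - L)).

(* time step t is counted in C_eps *)
Definition communicates (n : nat) (eps : R)
  (g : nat -> nat -> nat -> Prop) (x : nat -> nat -> R) (t : nat) : Prop :=
  exists i j, (i < n)%nat /\ (j < n)%nat /\ g t i j /\ Rabs (x t i - x t j) >= eps.

(* Agent 0 starts at 0 and all other agents at 1, so the positions stay sorted.  At each
   step only the two agents bounding the topmost gap of width at least eps average, each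
   moving the fraction rho of the gap towards the other.  This shrinks that gap k by the
   factor 1 - 2 rho and widens gap k + 1 by rho times its width; the wider gaps above k then
   evolve on their own, while gap k can only grow, until all of them are narrow again.  By
   induction on the depth d = n - k, a gap of width G with eps <= G (1 - 2 rho)^(d A)
   rho^(d - 1) is selected A times, and each selection triggers A^(d-1) communicating steps
   above it, for A^d in total.  At the bottom gap (d = n - 1, G = 1) one may take A of
   order log(1/eps) / (rho n) when eps <= rho^(2n). *)

From Stdlib Require Import Reals Lra Lia List Wf_nat.
From Stdlib Require Import Classical ZArith.
Open Scope R_scope.

Lemma nbr_pull_bounds (n : nat) (rho : R) (g : nat -> nat -> nat -> Prop)
    (x : nat -> nat -> R) (t i p : nat) (L R' : R) :
  0 <= rho <= 1/2 -> (i < n)%nat -> (p < n)%nat -> g t i i -> g t i p ->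
  (forall j, g t i j -> j = i \/ j = p) ->
  is_nbr_min n g x t i L -> is_nbr_max n g x t i R' ->
  L + rho * (R' - L) <= x t i + rho * (x t p - x t i) <= R' - rho * (R' - L).
Proof.
  intros Hrho Hi Hp Hii Hip Hnbr [[jl [_ [Hl <-]]] Lmin] [[jr [_ [Hr <-]]] Rmax].
  pose proof (Lmin i Hi Hii); pose proof (Lmin p Hp Hip).
  pose proof (Rmax i Hi Hii); pose proof (Rmax p Hp Hip).
  destruct (Hnbr jl Hl) as [-> | ->]; destruct (Hnbr jr Hr) as [-> | ->]; split; nra.
Qed.

Lemma pow_le_one x m : 0 <= x <= 1 -> x ^ m <= 1.
Proof. intros Hx; induction m as [|m IH]; simpl; nra. Qed.

Lemma le_of_le_scaled e H a b : 0 < e -> 0 <= a <= 1 -> 0 <= b <= 1 -> e <= H * a * b -> e <= H.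
Proof.
  intros He Ha Hb Hle; assert (Hab : 0 <= a * b <= 1) by nra.
  rewrite Rmult_assoc in Hle; destruct (Rle_lt_dec 0 H); nra.
Qed.

Lemma le_scaled_drop e H a b c :
  0 < e -> 0 <= b <= 1 -> e <= H * (a * b) * c -> e <= H * a * c.
Proof.
  intros He Hb Hle; replace (H * (a * b) * c) with (H * a * c * b) in Hle by ring.
  set (P := H * a * c) in *; destruct (Rle_lt_dec 0 P); nra.
Qed.

Section Construction.

Variables (n : nat) (rho eps : R).
Hypotheses (rho_pos : 0 < rho) (rho_lt_half : rho < 1/2) (eps_pos : 0 < eps).

Definition gap (s : nat -> R) (k : nat) : R := s k - s (k - 1)%nat.

Definition narrow_from (k : nat) (s : nat -> R) : Prop :=
  forall j, (k <= j <= n - 1)%nat -> gap s j < eps.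

Fixpoint top_wide_gap_upto (s : nat -> R) (m : nat) : option nat :=
  match m with
  | O => None
  | S m' => if Rle_dec eps (gap s m) then Some m else top_wide_gap_upto s m'
  end.

Lemma top_wide_gap_uptoP s m k :
  top_wide_gap_upto s m = Some k <->
  (1 <= k <= m)%nat /\ eps <= gap s k /\ (forall j, (k < j <= m)%nat -> gap s j < eps).
Proof.
  induction m as [|m IH]; simpl.
  - split; [discriminate | lia].
  - destruct (Rle_dec eps (gap s (S m))) as [wide | narrow].
    + split.
      * intros [= <-]; split; [lia | split; [exact wide | lia]].
      * intros (Hk & _ & Hnarrow); destruct (Nat.eq_dec k (S m)) as [-> | ne]; [easy|].
        exfalso; enough (gap s (S m) < eps) by lra; apply Hnarrow; lia.
    + rewrite IH; split.
      * intros (Hk & Hg & Hnarrow); split; [lia | split; [exact Hg|]].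
        intros j Hj; destruct (Nat.eq_dec j (S m)) as [-> | ne]; [lra | apply Hnarrow; lia].
      * intros (Hk & Hg & Hnarrow); destruct (Nat.eq_dec k (S m)) as [-> | ne]; [lra|].
        split; [lia | split; [exact Hg | intros j Hj; apply Hnarrow; lia]].
Qed.

Lemma top_wide_gap_upto_None s m :
  top_wide_gap_upto s m = None -> forall j, (1 <= j <= m)%nat -> gap s j < eps.
Proof.
  induction m as [|m IH]; simpl; intros Hnone j Hj; [lia|].
  destruct (Rle_dec eps (gap s (S m))); [discriminate|].
  destruct (Nat.eq_dec j (S m)) as [-> | ne]; [lra | apply IH; auto; lia].
Qed.

Definition top_wide_gap (s : nat -> R) : option nat := top_wide_gap_upto s (n - 1).

Lemma top_wide_gapP s k :
  top_wide_gap s = Some k <-> (1 <= k <= n - 1)%nat /\ eps <= gap s k /\ narrow_from (S k) s.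
Proof. apply top_wide_gap_uptoP. Qed.

Lemma top_wide_gap_None s : top_wide_gap s = None -> narrow_from 1 s.
Proof. intros Hnone j Hj; exact (top_wide_gap_upto_None s _ Hnone j Hj). Qed.

Definition mate (k i : nat) : nat :=
  if Nat.eq_dec i (k - 1) then k else if Nat.eq_dec i k then (k - 1)%nat else i.

Definition average (k : nat) (s : nat -> R) (i : nat) : R := s i + rho * (s (mate k i) - s i).

Section AverageGaps.

Variables (s : nat -> R) (k : nat).
Hypothesis k_pos : (1 <= k)%nat.

Ltac mate_cases := unfold gap, average, mate; repeat destruct Nat.eq_dec; try lia.

Lemma gap_average_self : gap (average k s) k = (1 - 2 * rho) * gap s k.
Proof. mate_cases; ring. Qed.

Lemma gap_average_next : gap (average k s) (S k) = gap s (S k) + rho * gap s k.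
Proof. mate_cases; replace (S k - 1)%nat with k by lia; ring. Qed.

Lemma gap_average_prev : (2 <= k)%nat -> gap (average k s) (k - 1) = gap s (k - 1) + rho * gap s k.
Proof. intros; mate_cases; ring. Qed.

Lemma gap_average_far j : (1 <= j)%nat -> j <> (k - 1)%nat -> j <> k -> j <> S k ->
  gap (average k s) j = gap s j.
Proof. intros; mate_cases; ring. Qed.

End AverageGaps.

Definition partner (s : nat -> R) (i : nat) : nat :=
  match top_wide_gap s with Some k => mate k i | None => i end.

Definition step (s : nat -> R) (i : nat) : R := s i + rho * (s (partner s i) - s i).

Lemma step_Some s k : top_wide_gap s = Some k -> step s = average k s.
Proof. intros Hk; unfold step, partner; rewrite Hk; reflexivity. Qed.

Lemma gap_step_None s j : top_wide_gap s = None -> gap (step s) j = gap s j.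
Proof. intros Hnone; unfold gap, step, partner; rewrite Hnone; ring. Qed.

Definition init (i : nat) : R := if Nat.eq_dec i 0 then 0 else 1.

Fixpoint X (t : nat) : nat -> R :=
  match t with O => init | S t' => step (X t') end.

Definition graph (t i j : nat) : Prop := j = i \/ j = partner (X t) i.

Lemma X_bounds t i : 0 <= X t i <= 1.
Proof.
  revert i; induction t as [|t IH]; intros i; simpl.
  - unfold init; destruct Nat.eq_dec; lra.
  - unfold step; pose proof (IH i); pose proof (IH (partner (X t) i)); split; nra.
Qed.

Lemma X_sorted t j : (1 <= j)%nat -> 0 <= gap (X t) j.
Proof.
  revert j; induction t as [|t IH]; intros j Hj; simpl.
  - unfold gap, init; repeat destruct Nat.eq_dec; try lia; lra.
  - destruct (top_wide_gap (X t)) as [k|] eqn:Hk; [| rewrite gap_step_None; auto].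
    rewrite (step_Some _ _ Hk).
    apply top_wide_gapP in Hk as (Hk & Hwide & _).
    destruct (Nat.eq_dec j k) as [-> | ne1].
    { rewrite gap_average_self by lia; apply Rmult_le_pos; lra. }
    destruct (Nat.eq_dec j (S k)) as [-> | ne2].
    { rewrite gap_average_next by lia; pose proof (IH (S k) ltac:(lia)); nra. }
    destruct (Nat.eq_dec j (k - 1)) as [-> | ne3].
    { rewrite gap_average_prev by lia; pose proof (IH (k - 1)%nat ltac:(lia)); nra. }
    rewrite gap_average_far by lia; auto.
Qed.

Lemma partner_lt s i : (i < n)%nat -> (partner s i < n)%nat.
Proof.
  unfold partner; destruct (top_wide_gap s) as [k|] eqn:Hk; [|auto].
  apply top_wide_gapP in Hk as (Hk & _); unfold mate; repeat destruct Nat.eq_dec; lia.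
Qed.

Lemma partner_involutive s i : partner s (partner s i) = i.
Proof.
  unfold partner; destruct (top_wide_gap s) as [k|] eqn:Hk; [|auto].
  apply top_wide_gapP in Hk as (Hk & _); unfold mate; repeat destruct Nat.eq_dec; lia.
Qed.

Lemma X_averaging : averaging_system n rho graph X.
Proof.
  split; [| split; [| split]].
  - now left.
  - intros t i j _ _ [-> | ->]; [now left | right; now rewrite partner_involutive].
  - intros t i _; apply X_bounds.
  - intros t i L R' Hi HL HR.
    apply (nbr_pull_bounds n rho graph X t i (partner (X t) i)); try assumption.
    + lra.
    + now apply partner_lt.
    + now left.
    + now right.
    + now intros j [-> | ->]; [left | right].
Qed.

Lemma communicates_of_Some u k :
  top_wide_gap (X u) = Some k -> communicates n eps graph X u.
Proof.
  intros Hk; assert (Hpartner : partner (X u) (k - 1) = k).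
  { unfold partner; rewrite Hk; unfold mate; destruct Nat.eq_dec; lia. }
  apply top_wide_gapP in Hk as (Hk & Hwide & _).
  exists (k - 1)%nat, k; split; [lia | split; [lia | split]].
  - now right.
  - unfold gap in Hwide; rewrite Rabs_minus_sym, Rabs_right; lra.
Qed.

Lemma narrow_from_init : narrow_from 2 init.
Proof. intros j Hj; unfold gap, init; repeat destruct Nat.eq_dec; try lia; lra. Qed.

Lemma gap_init_1 : gap init 1 = 1.
Proof. unfold gap, init; simpl; lra. Qed.

Definition talks (u : nat) : bool :=
  match top_wide_gap (X u) with Some _ => true | None => false end.

Definition talk_count (a m : nat) : nat := length (filter talks (seq a m)).

Lemma talk_count_add a m1 m2 :
  talk_count a (m1 + m2) = (talk_count a m1 + talk_count (a + m1) m2)%nat.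
Proof. unfold talk_count; now rewrite seq_app, filter_app, length_app. Qed.

Lemma talk_count_le a m m' : (m <= m')%nat -> (talk_count a m <= talk_count a m')%nat.
Proof. intros Hm; replace m' with (m + (m' - m))%nat by lia; rewrite talk_count_add; lia. Qed.

Definition selects_ge (k : nat) (s : nat -> R) : Prop :=
  match top_wide_gap s with Some j => (k <= j)%nat | None => False end.

Lemma selects_ge_S k s : selects_ge (S k) s -> selects_ge k s.
Proof. unfold selects_ge; destruct (top_wide_gap s); lia. Qed.

Lemma narrow_from_of_not_selects_ge k s : (1 <= k)%nat -> ~ selects_ge k s -> narrow_from k s.
Proof.
  unfold selects_ge; intros Hk Hnot j Hj; destruct (top_wide_gap s) as [i|] eqn:Hi.
  - apply top_wide_gapP in Hi as (_ & _ & Hnarrow); apply Hnarrow; lia.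
  - apply top_wide_gap_None; [exact Hi | lia].
Qed.

Lemma gap_step_le k s : (1 <= k)%nat -> selects_ge (S k) s -> gap s k <= gap (step s) k.
Proof.
  unfold selects_ge; destruct (top_wide_gap s) as [j|] eqn:Hj; [|easy]; intros Hk Hkj.
  rewrite (step_Some _ _ Hj); apply top_wide_gapP in Hj as (Hj & Hwide & _).
  destruct (Nat.eq_dec j (S k)) as [-> | ne].
  - pose proof (gap_average_prev s (S k) ltac:(lia) ltac:(lia)) as Hprev.
    replace (S k - 1)%nat with k in Hprev by lia; nra.
  - rewrite gap_average_far by lia; lra.
Qed.

Definition busy (k a m : nat) : Prop := forall u, (a <= u < a + m)%nat -> selects_ge k (X u).

Lemma busy_app k a m1 m2 : busy k a m1 -> busy k (a + m1) m2 -> busy k a (m1 + m2).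
Proof.
  intros H1 H2 u Hu; destruct (Nat.lt_ge_cases u (a + m1)); [apply H1 | apply H2]; lia.
Qed.

Lemma talk_count_busy k a m : busy k a m -> talk_count a m = m.
Proof.
  intros Hbusy; unfold talk_count.
  rewrite (filter_ext_in _ (fun _ => true)), filter_true, length_seq; [reflexivity|].
  intros u Hu; apply in_seq in Hu; specialize (Hbusy u Hu); unfold talks, selects_ge in *.
  now destruct (top_wide_gap (X u)).
Qed.

Lemma gap_busy_le k a m : (1 <= k)%nat -> busy (S k) a m -> gap (X a) k <= gap (X (a + m)) k.
Proof.
  intros Hk; induction m as [|m IH]; intros Hbusy; [rewrite Nat.add_0_r; lra|].
  eapply Rle_trans; [apply IH; intros u Hu; apply Hbusy; lia|].
  rewrite Nat.add_succ_r; apply gap_step_le; [exact Hk | apply Hbusy; lia].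
Qed.

Lemma busy_end k a m :
  busy k a m ->
  (exists m', (m <= m')%nat /\ busy k a m' /\ ~ selects_ge k (X (a + m'))) \/
  (forall u, (a <= u)%nat -> selects_ge k (X u)).
Proof.
  intros Hbusy.
  destruct (classic (exists u, (a + m <= u)%nat /\ ~ selects_ge k (X u))) as [Hex | Hnone].
  - left.
    destruct (dec_inh_nat_subset_has_unique_least_element _ (fun u => classic _) Hex)
      as (u & ((Hu & Hnot) & Hleast) & _).
    exists (u - a)%nat; replace (a + (u - a))%nat with u by lia.
    split; [lia | split; [| exact Hnot]].
    intros v Hv; destruct (Nat.lt_ge_cases v (a + m)) as [lt | ge]; [apply Hbusy; lia|].
    apply NNPP; intros Hv'; specialize (Hleast v (conj ge Hv')); lia.
  - right; intros u Hu; destruct (Nat.lt_ge_cases u (a + m)); [apply Hbusy; lia|].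
    apply NNPP; intros Hu'; apply Hnone; exists u; auto.
Qed.

Definition rounds_bound (d : nat) : Prop :=
  forall (A t : nat) (G : R),
    narrow_from (S (n - d)) (X t) -> G <= gap (X t) (n - d) ->
    eps <= G * (1 - 2 * rho) ^ (d * A) * rho ^ (d - 1) ->
    exists m, (A ^ d <= talk_count t m)%nat /\ busy (n - d) t m.

Section Level.

Variables (d k A : nat).
Hypotheses (d_pos : (1 <= d)%nat) (k_pos : (1 <= k)%nat) (level_depth : (k + d = n)%nat).
Hypothesis deeper : (2 <= d)%nat -> rounds_bound (d - 1).

Lemma talks_after_selection t H :
  top_wide_gap (X t) = Some k -> H <= gap (X t) k ->
  eps <= H * (1 - 2 * rho) ^ ((d - 1) * A) * rho ^ (d - 1) ->
  exists m, (A ^ (d - 1) <= talk_count t (S m))%nat /\ busy (S k) (S t) m.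
Proof.
  intros Hsel HH Heps.
  destruct (Nat.eq_dec d 1) as [-> | Hd].
  - exists 0%nat; split; [| intros u; lia].
    unfold talk_count, talks; simpl; rewrite Hsel; simpl; lia.
  - assert (Hstep : X (S t) = average k (X t)) by exact (step_Some _ _ Hsel).
    apply top_wide_gapP in Hsel as (Hk & Hwide & Hnarrow).
    assert (Hlevel : (n - (d - 1) = S k)%nat) by lia.
    destruct (deeper ltac:(lia) A (S t) (rho * H)) as (m & Hcount & Hbusy); rewrite ?Hlevel.
    + intros j Hj; rewrite Hstep, gap_average_far by lia; apply Hnarrow; lia.
    + rewrite Hstep, gap_average_next by lia.
      pose proof (X_sorted t (S k) ltac:(lia)); nra.
    + replace (rho ^ (d - 1)) with (rho * rho ^ (d - 1 - 1)) in Heps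
        by (replace (d - 1)%nat with (S (d - 1 - 1)) at 2 by lia; reflexivity).
      lra.
    + exists m; rewrite Hlevel in Hbusy; split; [| exact Hbusy].
      change (S m) with (1 + m)%nat; rewrite talk_count_add, Nat.add_1_r; lia.
Qed.

Lemma excursion t H :
  narrow_from (S k) (X t) -> H <= gap (X t) k ->
  eps <= H * (1 - 2 * rho) ^ ((d - 1) * A) * rho ^ (d - 1) ->
  exists m, (A ^ (d - 1) <= talk_count t m)%nat /\ busy k t m /\
    ((narrow_from (S k) (X (t + m)) /\ (1 - 2 * rho) * H <= gap (X (t + m)) k) \/
     (forall u, (t + m <= u)%nat -> selects_ge k (X u))).
Proof.
  intros Hnarrow HH Heps.
  assert (Hwide : eps <= H).
  { refine (le_of_le_scaled _ _ _ _ eps_pos _ _ Heps);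
      (split; [apply pow_le | apply pow_le_one]; lra). }
  assert (Hsel : top_wide_gap (X t) = Some k)
    by (apply top_wide_gapP; split; [lia | split; [lra | exact Hnarrow]]).
  assert (Hshrink : (1 - 2 * rho) * H <= gap (X (S t)) k).
  { cbn [X]; rewrite (step_Some _ _ Hsel), gap_average_self by lia; nra. }
  assert (Hbusy_k : forall m, busy (S k) (S t) m -> busy k t (S m)).
  { intros m Hbusy u Hu; destruct (Nat.eq_dec u t) as [-> | ne].
    - unfold selects_ge; rewrite Hsel; lia.
    - apply selects_ge_S, Hbusy; lia. }
  destruct (talks_after_selection t H Hsel HH Heps) as (m1 & Hcount & Hbusy).
  destruct (busy_end _ _ _ Hbusy) as [(m2 & Hm12 & Hbusy2 & Hreturn) | Hforever].
  - exists (S m2); split; [eapply Nat.le_trans; [exact Hcount | apply talk_count_le; lia]|].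
    split; [exact (Hbusy_k _ Hbusy2)|].
    left; replace (t + S m2)%nat with (S t + m2)%nat by lia; split.
    + apply narrow_from_of_not_selects_ge; [lia | exact Hreturn].
    + eapply Rle_trans; [exact Hshrink | exact (gap_busy_le _ _ _ k_pos Hbusy2)].
  - exists (S m1); split; [exact Hcount | split; [exact (Hbusy_k _ Hbusy)|]].
    right; intros u Hu; apply selects_ge_S, Hforever; lia.
Qed.

Lemma iterated_excursions i : forall t H,
  narrow_from (S k) (X t) -> H <= gap (X t) k ->
  eps <= H * (1 - 2 * rho) ^ ((d - 1) * A + i) * rho ^ (d - 1) ->
  exists m, (i * A ^ (d - 1) <= talk_count t m)%nat /\ busy k t m.
Proof.
  induction i as [|i IH]; intros t H Hnarrow HH Heps.
  - exists 0%nat; split; [lia | intros u; lia].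
  - assert (Hq : 0 <= 1 - 2 * rho <= 1) by lra.
    assert (Hexc : eps <= H * (1 - 2 * rho) ^ ((d - 1) * A) * rho ^ (d - 1)).
    { rewrite pow_add in Heps; refine (le_scaled_drop _ _ _ _ _ eps_pos _ Heps).
      all: try split; try apply pow_le; try apply pow_le_one; lra. }
    destruct (excursion t H Hnarrow HH Hexc) as (m & Hcount & Hbusy & [[Hnarrow' HH'] | Hforever]).
    + destruct (IH (t + m)%nat _ Hnarrow' HH') as (m' & Hcount' & Hbusy').
      { rewrite Nat.add_succ_r, <- tech_pow_Rmult in Heps; lra. }
      exists (m + m')%nat; split; [rewrite talk_count_add; simpl; lia | exact (busy_app _ _ _ _ Hbusy Hbusy')].
    + assert (Hbusy' : busy k (t + m) (S i * A ^ (d - 1))) by (intros u Hu; apply Hforever; lia).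
      exists (m + S i * A ^ (d - 1))%nat; split.
      * rewrite talk_count_add, (talk_count_busy _ _ _ Hbusy'); lia.
      * exact (busy_app _ _ _ _ Hbusy Hbusy').
Qed.

End Level.

Lemma rounds_bound_all d : (1 <= d <= n - 1)%nat -> rounds_bound d.
Proof.
  induction d as [|d IH]; intros Hd; [lia|].
  intros A t G Hnarrow HG Heps.
  assert (deeper : (2 <= S d)%nat -> rounds_bound (S d - 1)).
  { intros Hd2; replace (S d - 1)%nat with d by lia; apply IH; lia. }
  destruct (iterated_excursions (S d) (n - S d) A ltac:(lia) ltac:(lia) ltac:(lia) deeper A t G
              Hnarrow HG) as (m & Hcount & Hbusy).
  - replace ((S d - 1) * A + A)%nat with (S d * A)%nat by lia; exact Heps.
  - exists m; split; [| exact Hbusy].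
    rewrite Nat.pow_succ_r'; replace (S d - 1)%nat with d in Hcount by lia; exact Hcount.
Qed.

End Construction.

Lemma ln_le x y : 0 < x -> x <= y -> ln x <= ln y.
Proof.
  intros Hx [Hlt | ->]; [left; now apply ln_increasing | lra].
Qed.

Lemma le_of_ln_le x y : 0 < x -> 0 < y -> ln x <= ln y -> x <= y.
Proof.
  intros Hx Hy Hle; destruct (Rle_lt_dec x y) as [Hxy | Hyx]; [exact Hxy|].
  pose proof (ln_increasing y x Hy Hyx); lra.
Qed.

Lemma ln_one_sub_two_ge rho : 0 < rho <= 1/3 -> -6 * rho <= ln (1 - 2 * rho).
Proof.
  intros Hrho; set (q := 1 - 2 * rho).
  assert (Hq : 1/3 <= q) by (unfold q; lra).
  assert (Hinv : q * / q = 1) by (field; lra).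
  assert (Hinv_pos : 0 < / q) by (apply Rinv_0_lt_compat; lra).
  pose proof (exp_ineq1_le (ln (/ q))) as Hexp.
  rewrite exp_ln, ln_Rinv in Hexp by lra.
  assert (/ q <= 3) by nra.
  assert (/ q - 1 = 2 * rho * / q) by (unfold q in *; nra).
  nra.
Qed.

Lemma nat_ceil_small x : 0 <= x -> exists A : nat, x <= INR A /\ (INR A <= 1 \/ INR A <= 2 * x).
Proof.
  intros Hx; destruct (archimed x) as [Hup1 Hup2]; set (z := up x) in *.
  assert (Hz : (0 < z)%Z) by (apply lt_IZR; simpl; lra).
  exists (Z.to_nat z).
  assert (HA : INR (Z.to_nat z) = IZR z) by (rewrite INR_IZR_INZ, Z2Nat.id; [reflexivity | lia]).
  rewrite HA; split; [lra|].
  destruct (Rle_lt_dec 1 x); [right; lra | left].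
  assert (Hz2 : (z < 2)%Z) by (apply lt_IZR; simpl; lra).
  replace 1 with (IZR 1) by reflexivity; apply IZR_le; lia.
Qed.

Lemma rounds_ln_bound n rho eps (A : nat) :
  (2 <= n)%nat -> 0 < rho <= 1/3 -> 0 < eps <= rho ^ (2 * n) ->
  INR A <= 1 \/ 12 * rho * INR n * INR A <= ln (/ eps) ->
  eps <= (1 - 2 * rho) ^ ((n - 1) * A) * rho ^ (n - 2).
Proof.
  intros Hn Hrho Heps HA_cases.
  set (N := INR n) in *; set (Lam := ln (/ eps)) in *; set (q := 1 - 2 * rho).
  assert (HN : 2 <= N) by (unfold N; replace 2 with (INR 2) by reflexivity; apply le_INR; lia).
  assert (HA0 : 0 <= INR A) by apply pos_INR.
  assert (Hlnrho : ln rho <= 0) by (rewrite <- ln_1; apply ln_le; lra).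
  assert (Hlnq : ln rho <= ln q <= 0) by (split; [| rewrite <- ln_1]; apply ln_le; unfold q; lra).
  assert (Hlnq6 : - 6 * rho <= ln q) by exact (ln_one_sub_two_ge rho Hrho).
  assert (Hsmall : - Lam <= 2 * N * ln rho).
  { unfold Lam; rewrite ln_Rinv by lra.
    pose proof (ln_le _ _ (proj1 Heps) (proj2 Heps)) as Hle.
    rewrite ln_pow, mult_INR in Hle by lra; simpl (INR 2) in Hle; fold N in Hle; lra. }
  assert (Hrounds : - Lam / 2 <= (N - 1) * INR A * ln q).
  { destruct HA_cases as [HA1 | HAL].
    - assert (Hneg : (N - 1) * ln q <= 0) by nra.
      assert ((N - 1) * ln q <= (N - 1) * ln q * INR A) by nra; nra.
    - assert ((N - 1) * INR A * (- 6 * rho) <= (N - 1) * INR A * ln q)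
        by (apply Rmult_le_compat_l; nra).
      assert (6 * rho * ((N - 1) * INR A) <= 6 * rho * (N * INR A))
        by (apply Rmult_le_compat_l; nra).
      lra. }
  assert (Hq_pos : 0 < q) by (unfold q; lra).
  apply le_of_ln_le; [lra | apply Rmult_lt_0_compat; apply pow_lt; lra |].
  rewrite ln_mult, !ln_pow, mult_INR, !minus_INR by (lia || (apply pow_lt; lra) || lra).
  fold N; simpl (INR 1); simpl (INR 2).
  replace (ln eps) with (- Lam) by (unfold Lam; rewrite ln_Rinv; lra).
  nra.
Qed.

Lemma rounds_estimate n rho eps :
  (2 <= n)%nat -> 0 < rho <= 1/3 -> 0 < eps <= rho ^ (2 * n) ->
  exists A : nat, 0 <= 1/48 / (rho * INR n) * log2 (/ eps) <= INR A /\
    eps <= (1 - 2 * rho) ^ ((n - 1) * A) * rho ^ (n - 2).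
Proof.
  intros Hn Hrho Heps.
  set (N := INR n); set (Lam := ln (/ eps)).
  assert (HN : 2 <= N) by (unfold N; replace 2 with (INR 2) by reflexivity; apply le_INR; lia).
  assert (HLam : 0 <= Lam).
  { unfold Lam; rewrite ln_Rinv by lra.
    enough (ln eps <= 0) by lra; rewrite <- ln_1.
    apply ln_le; [lra | apply (Rle_trans _ _ _ (proj2 Heps)), pow_le_one; lra]. }
  set (base := 1/48 / (rho * N) * log2 (/ eps)).
  assert (Hbase : base = Lam / (12 * rho * N) / (4 * ln 2))
    by (unfold base, log2; fold Lam; pose proof ln_lt_2; field; lra).
  assert (Hbase_le : 2 * base * (12 * rho * N) <= Lam).
  { rewrite Hbase; pose proof ln_lt_2.
    replace (2 * (Lam / (12 * rho * N) / (4 * ln 2)) * (12 * rho * N)) with (Lam / (2 * ln 2))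
      by (field; lra).
    unfold Rdiv; rewrite <- (Rmult_1_r Lam) at 2; apply Rmult_le_compat_l; [lra|].
    rewrite <- Rinv_1; apply Rinv_le_contravar; lra. }
  assert (Hbase0 : 0 <= base).
  { rewrite Hbase; pose proof ln_lt_2; unfold Rdiv; repeat apply Rmult_le_pos; try lra;
      left; apply Rinv_0_lt_compat; nra. }
  destruct (nat_ceil_small base Hbase0) as (A & HA & HA_cases).
  exists A; split; [split; lra|].
  apply rounds_ln_bound; [exact Hn | exact Hrho | exact Heps |].
  destruct HA_cases as [HA1 | HA2]; [left; exact HA1 | right; fold N Lam].
  assert (12 * rho * N * INR A <= 12 * rho * N * (2 * base)) by (apply Rmult_le_compat_l; nra).
  lra.
Qed.

Theorem mainTheorem8 :
  exists c : R, 0 < c /\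
  forall (n : nat) (rho eps : R),
    (2 <= n)%nat -> 0 < rho -> rho <= 1/3 -> 0 < eps -> eps <= rho ^ (2 * n) ->
    exists (g : nat -> nat -> nat -> Prop) (x : nat -> nat -> R),
      averaging_system n rho g x /\
      exists T : list nat,
        NoDup T /\ (forall t, In t T -> communicates n eps g x t) /\
        (c / (rho * INR n) * log2 (/ eps)) ^ (n - 1) <= INR (length T).
Proof.
  exists (1/48); split; [lra|].
  intros n rho eps Hn Hrho Hrho3 Heps Hsmall.
  destruct (rounds_estimate n rho eps Hn (conj Hrho Hrho3) (conj Heps Hsmall))
    as (A & [Hbase Hbase_A] & Heps_A).
  destruct (rounds_bound_all n rho eps Hrho ltac:(lra) Heps (n - 1) ltac:(lia) A 0%nat 1)
    as (m & Hcount & _).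
  - replace (n - (n - 1))%nat with 1%nat by lia; now apply narrow_from_init.
  - replace (n - (n - 1))%nat with 1%nat by lia; simpl; rewrite gap_init_1; lra.
  - replace (n - 1 - 1)%nat with (n - 2)%nat by lia; lra.
  - exists (graph n rho eps), (X n rho eps); split; [apply X_averaging; lra|].
    exists (filter (talks n rho eps) (seq 0 m)); split; [| split].
    + apply NoDup_filter, seq_NoDup.
    + intros t Ht; apply filter_In in Ht as [_ Ht]; unfold talks in Ht.
      destruct (top_wide_gap _ _ _) as [k|] eqn:Hsel; [| discriminate].
      eapply communicates_of_Some; eassumption.
    + eapply Rle_trans; [apply pow_incr; split; eassumption|].
      rewrite <- pow_INR; apply le_INR, Hcount.
Qed.
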